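(* Let $f,g\colon\mathbb R\to\mathbb R$ be smooth functions with $f'(x)g'(y)<0$ and $f(x)\neq g(y)$ for all $(x,y)\in\mathbb R^2$, and let $\epsilon>0$. Define \[ h_\epsilon(x,t)=-\frac{(f(u_-+\epsilon)-g(u_++\epsilon))(f(u_--\epsilon)-g(u_+-\epsilon))}{(f(u_-+\epsilon)-f(u_--\epsilon))(g(u_++\epsilon)-g(u_+-\epsilon))},\qquad u_\pm=x\pm t . \] Then for all $(x,t)\in\mathbb R^2$ \[ h_\epsilon(x,t+\epsilon)\,h_\epsilon(x,t-\epsilon)=\bigl(1+h_\epsilon(x+\epsilon,t)\bigr)\bigl(1+h_\epsilon(x-\epsilon,t)\bigr), \] so that $\chi_{m,n}:=h_\epsilon(m\epsilon,n\epsilon)$, $(m,n)\in\mathbb Z^2$, solves the discrete Liouville equation $\chi_{m,n-1}\chi_{m,n+1}=(1+\chi_{m-1,n})(1+\chi_{m+1,n})$. Moreover $\ell(x,t)=\lim_{\epsilon\to0}\epsilon^2h_\epsilon(x,t)$ exists and $e^{\phi(x,t)}:=1/\ell(x,t)$ is given by $e^{\phi}=-4\,f'(u_-)g'(u_+)/(f(u_-)-g(u_+))^2$, which solves $\partial_t^2\phi-\partial_x^2\phi=-2e^{\phi}$. *)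

From Stdlib Require Import Reals.
Open Scope R_scope.

Definition smooth (f : R -> R) : Prop :=
  exists D : nat -> R -> R,
    D 0%nat = f /\ forall (n : nat) (x : R), derivable_pt_lim (D n) x (D (S n) x).

Definition h_eps (f g : R -> R) (eps x t : R) : R :=
  let um := x - t in
  let up := x + t in
  - ((f (um + eps) - g (up + eps)) * (f (um - eps) - g (up - eps)))
    / ((f (um + eps) - f (um - eps)) * (g (up + eps) - g (up - eps))).

Definition liouville_sol (phi : R -> R -> R) : Prop :=
  exists phi_t phi_tt phi_x phi_xx : R -> R -> R,
    forall x t : R,
      derivable_pt_lim (fun s => phi x s) t (phi_t x t) /\
      derivable_pt_lim (fun s => phi_t x s) t (phi_tt x t) /\
      derivable_pt_lim (fun y => phi y t) x (phi_x x t) /\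
      derivable_pt_lim (fun y => phi_x y t) x (phi_xx x t) /\
      phi_tt x t - phi_xx x t = -2 * exp (phi x t).

(* Write u = x - t, v = x + t.  For fixed eps, h_eps(x,t) is the cross ratio
   of the four values f(u+eps), f(u-eps), g(v+eps), g(v-eps).  Shifting (x,t)
   by (0,±eps) or (±eps,0) keeps the evaluation points on the grid
   u + {-2eps, 0, 2eps} for f and v + {-2eps, 0, 2eps} for g, and the
   discrete Liouville identity becomes a rational identity between cross
   ratios of six numbers (cross_ratio_liouville), valid whenever f and g
   are injective; injectivity follows from f', g' never vanishing (mean value
   theorem).

   For the continuum limit, eps^2 h_eps(x,t) is a quotient of two products:
   the numerator tends to (f(u) - g(v))^2 by continuity, the denominator to
   (2 f'(u)) (2 g'(v)) by symmetric difference quotients.  Finally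
   phi = ln(-4 f'(u) g'(v) / (f(u) - g(v))^2) restricted to a line t = const
   or x = const has the form ln(-4 a b / c^2) for one-variable functions
   a, b, c; its first and second derivatives are sums of logarithmic
   derivatives (log_profile, log_profile'), and along the two lines they
   differ only in the c-term, by exactly -2 e^phi. *)

From Stdlib Require Import Reals Lra Psatz FunctionalExtensionality.
Open Scope R_scope.

(* Differentiation rules for [derivable_pt_lim] in which the derivative is
   an arbitrary term [l] subject to an equation; chaining them with [eapply]
   and closing the equations with [ring]/[field] computes derivatives. *)
Lemma deriv_plus (F G : R -> R) (x lF lG l : R) :
  derivable_pt_lim F x lF -> derivable_pt_lim G x lG -> l = lF + lG ->
  derivable_pt_lim (fun s => F s + G s) x l.
Proof. intros HF HG ->; exact (derivable_pt_lim_plus F G x lF lG HF HG). Qed.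

Lemma deriv_minus (F G : R -> R) (x lF lG l : R) :
  derivable_pt_lim F x lF -> derivable_pt_lim G x lG -> l = lF - lG ->
  derivable_pt_lim (fun s => F s - G s) x l.
Proof. intros HF HG ->; exact (derivable_pt_lim_minus F G x lF lG HF HG). Qed.

Lemma deriv_opp (F : R -> R) (x lF l : R) :
  derivable_pt_lim F x lF -> l = - lF -> derivable_pt_lim (fun s => - F s) x l.
Proof. intros HF ->; exact (derivable_pt_lim_opp F x lF HF). Qed.

Lemma deriv_mult (F G : R -> R) (x lF lG l : R) :
  derivable_pt_lim F x lF -> derivable_pt_lim G x lG -> l = lF * G x + F x * lG ->
  derivable_pt_lim (fun s => F s * G s) x l.
Proof. intros HF HG ->; exact (derivable_pt_lim_mult F G x lF lG HF HG). Qed.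

Lemma deriv_div (F G : R -> R) (x lF lG l : R) :
  derivable_pt_lim F x lF -> derivable_pt_lim G x lG -> G x <> 0 ->
  l = (lF * G x - lG * F x) / (G x * G x) ->
  derivable_pt_lim (fun s => F s / G s) x l.
Proof. intros HF HG HG0 ->; exact (derivable_pt_lim_div F G x lF lG HF HG HG0). Qed.

Lemma deriv_comp (F G : R -> R) (x lG lF l : R) :
  derivable_pt_lim G x lG -> derivable_pt_lim F (G x) lF -> l = lF * lG ->
  derivable_pt_lim (fun s => F (G s)) x l.
Proof. intros HG HF ->; exact (derivable_pt_lim_comp G F x lG lF HG HF). Qed.

Lemma deriv_ln (G : R -> R) (x lG l : R) :
  derivable_pt_lim G x lG -> 0 < G x -> l = lG / G x ->
  derivable_pt_lim (fun s => ln (G s)) x l.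
Proof.
  intros HG Hpos ->.
  apply (deriv_comp ln G x lG (/ G x)); [exact HG | exact (derivable_pt_lim_ln _ Hpos) | ].
  unfold Rdiv; ring.
Qed.

Lemma deriv_reflect (F : R -> R) (c x l : R) :
  derivable_pt_lim F (c - x) l -> derivable_pt_lim (fun s => F (c - s)) x (- l).
Proof.
  intros HF; eapply deriv_comp; [eapply deriv_minus; [apply derivable_pt_lim_const | apply derivable_pt_lim_id | reflexivity]
                               | exact HF | ring].
Qed.

Lemma deriv_translate_l (F : R -> R) (c x l : R) :
  derivable_pt_lim F (c + x) l -> derivable_pt_lim (fun s => F (c + s)) x l.
Proof.
  intros HF; eapply deriv_comp; [eapply deriv_plus; [apply derivable_pt_lim_const | apply derivable_pt_lim_id | reflexivity]
                               | exact HF | ring].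
Qed.

Lemma deriv_translate_r_sub (F : R -> R) (c x l : R) :
  derivable_pt_lim F (x - c) l -> derivable_pt_lim (fun s => F (s - c)) x l.
Proof.
  intros HF; eapply deriv_comp; [eapply deriv_minus; [apply derivable_pt_lim_id | apply derivable_pt_lim_const | reflexivity]
                               | exact HF | ring].
Qed.

Lemma deriv_translate_r_add (F : R -> R) (c x l : R) :
  derivable_pt_lim F (x + c) l -> derivable_pt_lim (fun s => F (s + c)) x l.
Proof.
  intros HF; eapply deriv_comp; [eapply deriv_plus; [apply derivable_pt_lim_id | apply derivable_pt_lim_const | reflexivity]
                               | exact HF | ring].
Qed.

Lemma sign_condition_nonzero (F G : R -> R) :
  (forall u v, F u * G v < 0) -> (forall u, F u <> 0) /\ (forall v, G v <> 0).
Proof.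
  intros Hsign; split; [intros u E; specialize (Hsign u 0) | intros v E; specialize (Hsign 0 v)];
    rewrite E in Hsign; lra.
Qed.

Definition injective (F : R -> R) : Prop := forall a b, F a = F b -> a = b.

(* A function on R whose derivative never vanishes is injective: by the
   mean value theorem F(a) = F(b) with a < b gives a zero of F'. *)
Lemma injective_of_nonvanishing_derivative (F F' : R -> R) :
  (forall u, derivable_pt_lim F u (F' u)) -> (forall u, F' u <> 0) -> injective F.
Proof.
  intros HF HF0.
  pose (dF := fun u => exist (fun l => derivable_pt_abs F u l) (F' u) (HF u) : derivable_pt F u).
  assert (ordered : forall a b, a < b -> F a <> F b).
  { intros a b Hab Eab.
    destruct (MVT_cor1 F a b dF Hab) as [c [Hc _]]; simpl in Hc.
    rewrite Eab, Rminus_diag in Hc.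
    symmetry in Hc; apply Rmult_integral in Hc as [Hc | Hc]; [exact (HF0 c Hc) | lra]. }
  intros a b Eab; destruct (Rtotal_order a b) as [Hlt | [Heq | Hgt]].
  - exfalso; exact (ordered a b Hlt Eab).
  - exact Heq.
  - exfalso; exact (ordered b a Hgt (eq_sym Eab)).
Qed.

Definition cross_ratio (a a' b b' : R) : R := - ((a - b) * (a' - b')) / ((a - a') * (b - b')).

(* h_eps(x,t) is the cross ratio of f at x-t±eps and g at x+t±eps; the
   evaluation points may be given in any ring-equivalent form. *)
Lemma h_eps_cross_ratio (f g : R -> R) (e x t p p' q q' : R) :
  p = x - t + e -> p' = x - t - e -> q = x + t + e -> q' = x + t - e ->
  h_eps f g e x t = cross_ratio (f p) (f p') (g q) (g q').
Proof. intros -> -> -> ->; reflexivity. Qed.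

Lemma cross_ratio_liouville (am a0 ap bm b0 bp : R) :
  a0 <> am -> ap <> a0 -> b0 <> bm -> bp <> b0 ->
  cross_ratio a0 am bp b0 * cross_ratio ap a0 b0 bm
  = (1 + cross_ratio ap a0 bp b0) * (1 + cross_ratio a0 am b0 bm).
Proof.
  intros; unfold cross_ratio.
  field; repeat split; apply Rminus_eq_contra; assumption.
Qed.

(* Discrete Liouville identity for h_eps: all four shifted values of h_eps
   are cross ratios on the grid x-t+{-2eps,0,2eps}, x+t+{-2eps,0,2eps}. *)
Lemma discrete_liouville (f g : R -> R) (e x t : R) :
  injective f -> injective g -> 0 < e ->
  h_eps f g e x (t + e) * h_eps f g e x (t - e)
  = (1 + h_eps f g e (x + e) t) * (1 + h_eps f g e (x - e) t).
Proof.
  intros Hf Hg He.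
  rewrite (h_eps_cross_ratio f g e x (t + e) (x - t) (x - t - 2 * e) (x + t + 2 * e) (x + t)),
          (h_eps_cross_ratio f g e x (t - e) (x - t + 2 * e) (x - t) (x + t) (x + t - 2 * e)),
          (h_eps_cross_ratio f g e (x + e) t (x - t + 2 * e) (x - t) (x + t + 2 * e) (x + t)),
          (h_eps_cross_ratio f g e (x - e) t (x - t) (x - t - 2 * e) (x + t) (x + t - 2 * e))
    by ring.
  apply cross_ratio_liouville; intro E; [apply Hf in E | apply Hf in E | apply Hg in E | apply Hg in E];
    lra.
Qed.

Lemma discrete_liouville_lattice (f g : R -> R) (e : R) (m n : Z) :
  injective f -> injective g -> 0 < e ->
  h_eps f g e (IZR m * e) (IZR (n - 1) * e) * h_eps f g e (IZR m * e) (IZR (n + 1) * e)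
  = (1 + h_eps f g e (IZR (m - 1) * e) (IZR n * e)) * (1 + h_eps f g e (IZR (m + 1) * e) (IZR n * e)).
Proof.
  intros Hf Hg He.
  rewrite !minus_IZR, !plus_IZR.
  replace ((IZR n - 1) * e) with (IZR n * e - e) by ring.
  replace ((IZR n + 1) * e) with (IZR n * e + e) by ring.
  replace ((IZR m - 1) * e) with (IZR m * e - e) by ring.
  replace ((IZR m + 1) * e) with (IZR m * e + e) by ring.
  rewrite Rmult_comm, discrete_liouville by assumption.
  ring.
Qed.

Lemma right_quotient_limit (F : R -> R) (u l : R) :
  derivable_pt_lim F u l ->
  limit1_in (fun e => (F (u + e) - F u) / e) (fun e => 0 < e) l 0.
Proof.
  intros HF; apply (limit1_imp _ (fun e => e <> 0)); [intros e He; lra |].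
  exact (uniqueness_step2 F u l HF).
Qed.

Lemma left_quotient_limit (F : R -> R) (u l : R) :
  derivable_pt_lim F u l ->
  limit1_in (fun e => (F (u - e) - F u) / - e) (fun e => 0 < e) l 0.
Proof.
  intros HF eta Heta; destruct (HF eta Heta) as [delta Hdelta].
  exists delta; split; [apply cond_pos |].
  intros e [He Hclose]; simpl in *; unfold R_dist in *; rewrite Rminus_0_r in Hclose.
  replace (u - e) with (u + - e) by ring.
  apply Hdelta; [lra | rewrite Rabs_Ropp; exact Hclose].
Qed.

Lemma symmetric_quotient_limit (F : R -> R) (u l : R) :
  derivable_pt_lim F u l ->
  limit1_in (fun e => (F (u + e) - F (u - e)) / e) (fun e => 0 < e) (2 * l) 0.
Proof.
  intros HF; replace (2 * l) with (l + l) by ring.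
  apply (limit1_ext (fun e => (F (u + e) - F u) / e + (F (u - e) - F u) / - e)).
  - intros e He; field; lra.
  - apply limit_plus; [apply right_quotient_limit | apply left_quotient_limit]; exact HF.
Qed.

Lemma right_continuity (F : R -> R) (u l : R) :
  derivable_pt_lim F u l -> limit1_in (fun e => F (u + e)) (fun e => 0 < e) (F u) 0.
Proof.
  intros HF; replace (F u) with (F u + 0 * l) by ring.
  apply (limit1_ext (fun e => F u + e * ((F (u + e) - F u) / e))).
  - intros e He; field; lra.
  - apply limit_plus; [apply limit_free | apply limit_mul; [apply lim_x | exact (right_quotient_limit F u l HF)]].
Qed.

Lemma left_continuity (F : R -> R) (u l : R) :
  derivable_pt_lim F u l -> limit1_in (fun e => F (u - e)) (fun e => 0 < e) (F u) 0.
Proof.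
  intros HF; replace (F u) with (F u + - 0 * l) by ring.
  apply (limit1_ext (fun e => F u + - e * ((F (u - e) - F u) / - e))).
  - intros e He; field; lra.
  - apply limit_plus; [apply limit_free |].
    apply limit_mul; [apply limit_Ropp, lim_x | exact (left_quotient_limit F u l HF)].
Qed.

(* Continuum limit: eps^2 h_eps(x,t) = -(product of two f-g differences)
   divided by the product of the symmetric difference quotients of f and g,
   which tends to -(f(u) - g(v))^2 / ((2 f'(u)) (2 g'(v))). *)
Lemma scaled_h_eps_limit (f f1 g g1 : R -> R) (x t : R) :
  (forall u, derivable_pt_lim f u (f1 u)) -> (forall v, derivable_pt_lim g v (g1 v)) ->
  injective f -> injective g -> f1 (x - t) <> 0 -> g1 (x + t) <> 0 ->
  limit1_in (fun e => e ^ 2 * h_eps f g e x t) (fun e => 0 < e)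
    (- (f (x - t) - g (x + t)) ^ 2 / (4 * f1 (x - t) * g1 (x + t))) 0.
Proof.
  intros Hf1 Hg1 Hf Hg Hf0 Hg0.
  set (um := x - t); set (up := x + t).
  assert (numerator : limit1_in (fun e => (f (um + e) - g (up + e)) * (f (um - e) - g (up - e)))
                        (fun e => 0 < e) ((f um - g up) * (f um - g up)) 0).
  { apply limit_mul; apply limit_minus;
      [ exact (right_continuity f um _ (Hf1 um)) | exact (right_continuity g up _ (Hg1 up))
      | exact (left_continuity f um _ (Hf1 um)) | exact (left_continuity g up _ (Hg1 up)) ]. }
  assert (denominator : limit1_in
            (fun e => (f (um + e) - f (um - e)) / e * ((g (up + e) - g (up - e)) / e))
            (fun e => 0 < e) (2 * f1 um * (2 * g1 up)) 0).
  { apply limit_mul; apply symmetric_quotient_limit; auto. }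
  replace (- (f um - g up) ^ 2 / (4 * f1 um * g1 up))
    with (- ((f um - g up) * (f um - g up)) * / (2 * f1 um * (2 * g1 up))) by (field; auto).
  apply (limit1_ext (fun e => - ((f (um + e) - g (up + e)) * (f (um - e) - g (up - e)))
                              * / ((f (um + e) - f (um - e)) / e * ((g (up + e) - g (up - e)) / e)))).
  - intros e He; unfold h_eps; fold um up.
    assert (Df : f (um + e) - f (um - e) <> 0)
      by (intro E; apply Rminus_diag_uniq in E; apply Hf in E; lra).
    assert (Dg : g (up + e) - g (up - e) <> 0)
      by (intro E; apply Rminus_diag_uniq in E; apply Hg in E; lra).
    field; repeat split; try assumption; lra.
  - apply limit_mul; [apply limit_Ropp, numerator |].
    apply limit_inv; [exact denominator |].
    repeat apply Rmult_integral_contrapositive_currified; try assumption; lra.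
Qed.

Definition log_deriv (w w1 : R -> R) (s : R) : R := w1 s / w s.

Definition log_deriv2 (w w1 w2 : R -> R) (s : R) : R := (w2 s * w s - w1 s ^ 2) / w s ^ 2.

Lemma log_deriv_derivable (w w1 w2 : R -> R) (s : R) :
  derivable_pt_lim w s (w1 s) -> derivable_pt_lim w1 s (w2 s) -> w s <> 0 ->
  derivable_pt_lim (log_deriv w w1) s (log_deriv2 w w1 w2 s).
Proof.
  intros Hw Hw1 Hw0; unfold log_deriv2.
  apply (deriv_div w1 w s (w2 s) (w1 s)); auto.
  field; exact Hw0.
Qed.

(* For s ↦ ln(-4 a(s) b(s) / c(s)^2): its derivative a'/a + b'/b - 2c'/c
   and the derivative of the latter. *)
Definition log_profile (a a1 b b1 c c1 : R -> R) (s : R) : R :=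
  log_deriv a a1 s + log_deriv b b1 s - 2 * log_deriv c c1 s.

Definition log_profile' (a a1 a2 b b1 b2 c c1 c2 : R -> R) (s : R) : R :=
  log_deriv2 a a1 a2 s + log_deriv2 b b1 b2 s - 2 * log_deriv2 c c1 c2 s.

Lemma ln_quotient_derivable (a a1 b b1 c c1 : R -> R) (s : R) :
  derivable_pt_lim a s (a1 s) -> derivable_pt_lim b s (b1 s) -> derivable_pt_lim c s (c1 s) ->
  a s * b s < 0 -> c s <> 0 ->
  derivable_pt_lim (fun s => ln (-4 * a s * b s / c s ^ 2)) s (log_profile a a1 b b1 c c1 s).
Proof.
  intros Ha Hb Hc Hab Hc0.
  assert (Hc2 : 0 < c s ^ 2) by (rewrite <- Rsqr_pow2; apply Rsqr_pos_lt; exact Hc0).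
  assert (Ha0 : a s <> 0) by (intro E; rewrite E in Hab; lra).
  assert (Hb0 : b s <> 0) by (intro E; rewrite E in Hab; lra).
  eapply deriv_ln.
  - eapply deriv_div.
    + eapply deriv_mult; [eapply deriv_mult; [apply derivable_pt_lim_const | exact Ha | reflexivity]
                         | exact Hb | reflexivity].
    + eapply deriv_mult; [exact Hc | eapply deriv_mult; [exact Hc | apply derivable_pt_lim_const | reflexivity]
                         | reflexivity].
    + apply Rgt_not_eq; exact Hc2.
    + reflexivity.
  - apply Rdiv_lt_0_compat; [nra | exact Hc2].
  - unfold log_profile, log_deriv; field; auto.
Qed.

Lemma log_profile_derivable (a a1 a2 b b1 b2 c c1 c2 : R -> R) (s : R) :
  derivable_pt_lim a s (a1 s) -> derivable_pt_lim a1 s (a2 s) ->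
  derivable_pt_lim b s (b1 s) -> derivable_pt_lim b1 s (b2 s) ->
  derivable_pt_lim c s (c1 s) -> derivable_pt_lim c1 s (c2 s) ->
  a s <> 0 -> b s <> 0 -> c s <> 0 ->
  derivable_pt_lim (log_profile a a1 b b1 c c1) s (log_profile' a a1 a2 b b1 b2 c c1 c2 s).
Proof.
  intros; unfold log_profile'.
  eapply deriv_minus; [eapply deriv_plus; [apply log_deriv_derivable; eauto
                                          | apply log_deriv_derivable; eauto | reflexivity]
                      | eapply deriv_mult; [apply derivable_pt_lim_const | apply log_deriv_derivable; eauto
                                           | reflexivity] | ring].
Qed.

(* On the line x = const, phi is
   ln(-4 a b / c^2) with a = f1(x-s), b = g1(x+s), c = f(x-s) - g(x+s); on the
   line t = const likewise with a = f1(s-t), b = g1(s+t), c = f(s-t) - g(s+t).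
   The a- and b-contributions to phi_tt and phi_xx coincide; the
   c-contributions differ by 2((f1+g1)^2 - (f1-g1)^2)/c^2 = 8 f1 g1 / c^2,
   which is -2 e^phi. *)
Section ContinuumLiouville.

Variables f f1 f2 f3 g g1 g2 g3 : R -> R.
Hypothesis Hf1 : forall u, derivable_pt_lim f u (f1 u).
Hypothesis Hf2 : forall u, derivable_pt_lim f1 u (f2 u).
Hypothesis Hf3 : forall u, derivable_pt_lim f2 u (f3 u).
Hypothesis Hg1 : forall v, derivable_pt_lim g v (g1 v).
Hypothesis Hg2 : forall v, derivable_pt_lim g1 v (g2 v).
Hypothesis Hg3 : forall v, derivable_pt_lim g2 v (g3 v).
Hypothesis Hsign : forall u v, f1 u * g1 v < 0.
Hypothesis Hsep : forall u v, f u <> g v.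

Let f1_nonzero : forall u, f1 u <> 0 := proj1 (sign_condition_nonzero f1 g1 Hsign).
Let g1_nonzero : forall v, g1 v <> 0 := proj2 (sign_condition_nonzero f1 g1 Hsign).

Let wronskian_nonzero (x t : R) : f (x - t) - g (x + t) <> 0.
Proof. apply Rminus_eq_contra, Hsep. Qed.

Lemma liouville_potential_pos (x t : R) :
  0 < -4 * f1 (x - t) * g1 (x + t) / (f (x - t) - g (x + t)) ^ 2.
Proof.
  apply Rdiv_lt_0_compat; [pose proof (Hsign (x - t) (x + t)); nra |].
  rewrite <- Rsqr_pow2; apply Rsqr_pos_lt, wronskian_nonzero.
Qed.

Lemma liouville_potential_solution :
  liouville_sol (fun x t => ln (-4 * f1 (x - t) * g1 (x + t) / (f (x - t) - g (x + t)) ^ 2)).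
Proof.
  exists (fun x t => log_profile (fun s => f1 (x - s)) (fun s => - f2 (x - s))
                       (fun s => g1 (x + s)) (fun s => g2 (x + s))
                       (fun s => f (x - s) - g (x + s)) (fun s => - f1 (x - s) - g1 (x + s)) t).
  exists (fun x t => log_profile' (fun s => f1 (x - s)) (fun s => - f2 (x - s)) (fun s => f3 (x - s))
                       (fun s => g1 (x + s)) (fun s => g2 (x + s)) (fun s => g3 (x + s))
                       (fun s => f (x - s) - g (x + s)) (fun s => - f1 (x - s) - g1 (x + s))
                       (fun s => f2 (x - s) - g2 (x + s)) t).
  exists (fun y t => log_profile (fun s => f1 (s - t)) (fun s => f2 (s - t))
                       (fun s => g1 (s + t)) (fun s => g2 (s + t))
                       (fun s => f (s - t) - g (s + t)) (fun s => f1 (s - t) - g1 (s + t)) y).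
  exists (fun y t => log_profile' (fun s => f1 (s - t)) (fun s => f2 (s - t)) (fun s => f3 (s - t))
                       (fun s => g1 (s + t)) (fun s => g2 (s + t)) (fun s => g3 (s + t))
                       (fun s => f (s - t) - g (s + t)) (fun s => f1 (s - t) - g1 (s + t))
                       (fun s => f2 (s - t) - g2 (s + t)) y).
  intros x t; repeat split.
  - apply ln_quotient_derivable.
    + apply deriv_reflect, Hf2.
    + apply deriv_translate_l, Hg2.
    + eapply deriv_minus; [apply deriv_reflect, Hf1 | apply deriv_translate_l, Hg1 | ring].
    + apply Hsign.
    + apply wronskian_nonzero.
  - apply log_profile_derivable; auto.
    + apply deriv_reflect, Hf2.
    + eapply deriv_opp; [apply deriv_reflect, Hf3 | ring].
    + apply deriv_translate_l, Hg2.
    + apply deriv_translate_l, Hg3.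
    + eapply deriv_minus; [apply deriv_reflect, Hf1 | apply deriv_translate_l, Hg1 | ring].
    + eapply deriv_minus; [eapply deriv_opp; [apply deriv_reflect, Hf2 | reflexivity]
                          | apply deriv_translate_l, Hg2 | ring].
  - apply ln_quotient_derivable.
    + apply deriv_translate_r_sub, Hf2.
    + apply deriv_translate_r_add, Hg2.
    + eapply deriv_minus; [apply deriv_translate_r_sub, Hf1 | apply deriv_translate_r_add, Hg1 | ring].
    + apply Hsign.
    + apply wronskian_nonzero.
  - apply log_profile_derivable; auto.
    + apply deriv_translate_r_sub, Hf2.
    + apply deriv_translate_r_sub, Hf3.
    + apply deriv_translate_r_add, Hg2.
    + apply deriv_translate_r_add, Hg3.
    + eapply deriv_minus; [apply deriv_translate_r_sub, Hf1 | apply deriv_translate_r_add, Hg1 | ring].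
    + eapply deriv_minus; [apply deriv_translate_r_sub, Hf2 | apply deriv_translate_r_add, Hg2 | ring].
  - rewrite exp_ln by apply liouville_potential_pos; unfold log_profile', log_deriv2.
    field; auto.
Qed.

End ContinuumLiouville.

(* A smooth function with derivative F1 has derivatives F1' = F2 and
   F2' = F3: by uniqueness of derivatives F1 is the first element of the tower. *)
Lemma smooth_higher_derivatives (F F1 : R -> R) :
  smooth F -> (forall u, derivable_pt_lim F u (F1 u)) ->
  exists F2 F3 : R -> R,
    (forall u, derivable_pt_lim F1 u (F2 u)) /\ (forall u, derivable_pt_lim F2 u (F3 u)).
Proof.
  intros [DF [DF0 HDF]] HF1; subst F.
  assert (first : F1 = DF 1%nat).
  { apply functional_extensionality; intro u.
    exact (uniqueness_limite (DF 0%nat) u _ _ (HF1 u) (HDF 0%nat u)). }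
  subst F1; exists (DF 2%nat), (DF 3%nat); split; apply HDF.
Qed.

Theorem mainTheorem1 (f f' g g' : R -> R)
  (Hf : smooth f) (Hg : smooth g)
  (Hf' : forall x, derivable_pt_lim f x (f' x))
  (Hg' : forall y, derivable_pt_lim g y (g' y))
  (Hder : forall x y, f' x * g' y < 0)
  (Hneq : forall x y, f x <> g y) :
  (* discrete Liouville identity for h_eps *)
  (forall eps x t, 0 < eps ->
     h_eps f g eps x (t + eps) * h_eps f g eps x (t - eps)
     = (1 + h_eps f g eps (x + eps) t) * (1 + h_eps f g eps (x - eps) t)) /\
  (* chi_{m,n} := h_eps(m eps, n eps) solves the discrete Liouville equation *)
  (forall eps, 0 < eps ->
     let chi := fun m n : Z => h_eps f g eps (IZR m * eps) (IZR n * eps) in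
     forall m n : Z,
       chi m (n - 1)%Z * chi m (n + 1)%Z
       = (1 + chi (m - 1)%Z n) * (1 + chi (m + 1)%Z n)) /\
  (* the continuum limit *)
  (let E := fun x t =>
       -4 * f' (x - t) * g' (x + t) / (f (x - t) - g (x + t)) ^ 2 in
   let phi := fun x t => ln (E x t) in
   (forall x t, exists l : R,
       limit1_in (fun e => e ^ 2 * h_eps f g e x t) (fun e => 0 < e) l 0 /\
       l <> 0 /\ exp (phi x t) = / l /\ / l = E x t) /\
   liouville_sol phi).
Proof.
  destruct (smooth_higher_derivatives f f' Hf Hf') as [f2 [f3 [Hf2 Hf3]]].
  destruct (smooth_higher_derivatives g g' Hg Hg') as [g2 [g3 [Hg2 Hg3]]].
  destruct (sign_condition_nonzero f' g' Hder) as [f'_nonzero g'_nonzero].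
  pose proof (injective_of_nonvanishing_derivative f f' Hf' f'_nonzero) as f_injective.
  pose proof (injective_of_nonvanishing_derivative g g' Hg' g'_nonzero) as g_injective.
  split; [intros eps x t; exact (discrete_liouville f g eps x t f_injective g_injective) |].
  split; [intros eps Heps chi m n; exact (discrete_liouville_lattice f g eps m n f_injective g_injective Heps) |].
  intros E phi; split.
  - intros x t.
    pose proof (liouville_potential_pos f f' g g' Hder Hneq x t) as E_pos.
    exists (/ E x t); repeat split.
    + replace (/ E x t) with (- (f (x - t) - g (x + t)) ^ 2 / (4 * f' (x - t) * g' (x + t))).
      * apply scaled_h_eps_limit; auto.
      * pose proof (Rminus_eq_contra _ _ (Hneq (x - t) (x + t))).
        unfold E; field; auto.
    + apply Rinv_neq_0_compat, Rgt_not_eq, E_pos.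
    + unfold phi; rewrite Rinv_inv, exp_ln by exact E_pos; reflexivity.
    + apply Rinv_inv.
  - exact (liouville_potential_solution f f' f2 f3 g g' g2 g3 Hf' Hf2 Hf3 Hg' Hg2 Hg3 Hder Hneq).
Qed.
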